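(* Let $p=4f+1$ be a prime, and write $p=x^2+4y^2$ with integers $x,y$ and $x\equiv1\pmod 4$. Then $g_4(p)=4$ if $p=5$; $g_4(p)=3$ if $p\in\{13,17,29\}$; and $g_4(p)=2$ otherwise.
   Context: For $a\in\mathbb{F}_p^*$, $s_d(p,a)=\min\{k\mid a=\sum_{i=1}^k a_i^d,\ a_i\in\mathbb{F}_p^*\}$, and $g_d(p)=\max_{a\in\mathbb{F}_p^*}s_d(p,a)$ (the smallest $k$ such that every element of $\mathbb{F}_p^*$ is a sum of $k$ nonzero $d$-th powers). *)

From mathcomp Require Import all_boot all_order all_algebra.
Set Implicit Arguments. Unset Strict Implicit. Unset Printing Implicit Defensive.
Import GRing.Theory.
Local Open Scope ring_scope.

Definition sum_nz_powers (d p k : nat) (a : 'F_p) : bool :=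
  [exists f : {ffun 'I_k -> 'F_p}, [forall i, f i != 0] && (a == \sum_(i < k) f i ^+ d)].

Definition s_is (d p : nat) (a : 'F_p) (k : nat) : Prop :=
  sum_nz_powers d k a /\ (forall j, (j < k)%N -> ~~ sum_nz_powers d j a).

(* g_d(p) = n : n = max_{a in F_p^*} s_d(p,a) (all s_d(p,a) defined) *)
Definition g_is (d p n : nat) : Prop :=
  (forall a : 'F_p, a != 0 -> exists2 k, s_is d a k & (k <= n)%N) /\
  (exists2 a : 'F_p, a != 0 & s_is d a n).

(* For a finite field with q >= 56 elements and odd characteristic, every a != 0
   is a sum of two nonzero fourth powers. Writing u^4 = (u^2)^2 and counting square
   roots with the quadratic character chi, the number of solutions of u^4 + v^4 = a is
     q - chi(-1) + 2 phi(-a) + chi(2) (phi(-a^2) - 1 - chi(-1)),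
   where phi(c) = sum_v chi(v (v^2 + c)) is a Jacobsthal sum. Its second moment
   sum_c phi(c)^2 <= 2q(q-1) and the scaling phi(c t^2) = chi(t) phi(c) give
   phi(c)^2 <= 4q for c != 0, so there are more than 8 solutions, while at most 8 have
   u = 0 or v = 0. As 1 and -1 have the same fourth power, some element is not a
   fourth power, hence g_4(p) = 2 for p >= 56. The primes p = 1 (mod 4) below 56 are
   settled by computation. *)

From mathcomp Require Import all_boot all_order all_algebra.
From mathcomp Require Import zify ring.
Set Implicit Arguments. Unset Strict Implicit. Unset Printing Implicit Defensive.
Import GRing.Theory Num.Theory Order.TTheory.
Local Open Scope ring_scope.

(* 56 is the least Q >= 11 with 36 Q < (Q - 11)^2. *)
Lemma sqr_le_lower_bound (j Q : int) : j ^+ 2 <= 4 * Q -> 56 <= Q -> - (Q - 11) < 3 * j.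
Proof. nia. Qed.

Section OddFiniteField.
Variable F : finFieldType.
Hypothesis two_neq0 : (2 : F) != 0.
Local Notation q := #|F|.

Definition issq (a : F) : bool := [exists t, t ^+ 2 == a].
Definition nsqrt (a : F) : nat := #|[pred t : F | t ^+ 2 == a]|.
(* The quadratic character: nsqrt a is 1, 2 or 0 as a is 0, a nonzero square or a non-square. *)
Definition qchar (a : F) : int := (nsqrt a)%:Z - 1.

Lemma nsqrtE a : (nsqrt a)%:Z = 1 + qchar a.
Proof. by rewrite /qchar addrC subrK. Qed.

Lemma sum_sqr (G : F -> int) : \sum_t G (t ^+ 2) = \sum_a (nsqrt a)%:Z * G a.
Proof.
rewrite (partition_big (fun t => t ^+ 2) xpredT) //=; apply: eq_bigr => a _.
rewrite (eq_bigr (fun _ => G a)) => [|t /eqP -> //].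
by rewrite sumr_const -mulr_natl natz.
Qed.

Lemma nsqrt_sum a : (nsqrt a)%:Z = \sum_t (t ^+ 2 == a)%:R.
Proof.
rewrite (sum_sqr (fun b => (b == a)%:R)) (bigD1 a) //= eqxx mulr1 big1 ?addr0 //.
by move=> b /negbTE ->; rewrite mulr0.
Qed.

Lemma nsqrt0 : nsqrt 0 = 1%N.
Proof. by rewrite -(card1 (0 : F)); apply: eq_card => t; rewrite !inE expf_eq0. Qed.

Lemma nsqrt_sqr t : t != 0 -> nsqrt (t ^+ 2) = 2%N.
Proof.
move=> t_neq0; rewrite /nsqrt (eq_card (B := pred2 t (- t))) => [|s]; last first.
  by rewrite !inE eqf_sqr.
by rewrite card2 -addr_eq0 -mulr2n -mulr_natl mulf_neq0.
Qed.

Lemma nsqrt_nsq a : ~~ issq a -> nsqrt a = 0%N.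
Proof. by move=> /existsPn a_nsq; apply: eq_card0 => t; rewrite inE (negbTE (a_nsq t)). Qed.

Lemma nsqrt_le2 a : (nsqrt a <= 2)%N.
Proof.
have [/existsP [t /eqP <-]|/nsqrt_nsq -> //] := boolP (issq a).
by have [->|/nsqrt_sqr ->] := eqVneq t 0; rewrite // expr0n /= nsqrt0.
Qed.

Lemma qchar_ge a : -1 <= qchar a.
Proof. by rewrite /qchar lerBrDr addNr. Qed.

Lemma qchar_le1 a : qchar a <= 1.
Proof. by rewrite /qchar lerBlDr lez_nat nsqrt_le2. Qed.

Lemma qchar0 : qchar 0 = 0.
Proof. by rewrite /qchar nsqrt0. Qed.

Lemma qchar_sqr t : t != 0 -> qchar (t ^+ 2) = 1.
Proof. by move=> t_neq0; rewrite /qchar nsqrt_sqr. Qed.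

Lemma qcharE a : qchar a = if a == 0 then 0 else if issq a then 1 else -1.
Proof.
have [->|a_neq0] := eqVneq a 0; first exact: qchar0.
have [/existsP [t /eqP t2a]|a_nsq] := ifPn; last by rewrite /qchar nsqrt_nsq.
by rewrite -t2a qchar_sqr //; apply: contraNneq a_neq0 => t0; rewrite -t2a t0 expr0n.
Qed.

Lemma sum_nsqrt : \sum_a (nsqrt a)%:Z = q%:Z.
Proof.
have := sum_sqr (fun _ => 1); rewrite sumr_const /= => /esym.
by under eq_bigr do rewrite mulr1; move=> ->; rewrite natz.
Qed.

Lemma sum_qchar : \sum_a qchar a = 0.
Proof. by rewrite sumrB sum_nsqrt sumr_const natz subrr. Qed.

Lemma card_sqr_nsq : #|[set x | (x != 0) && issq x]| = #|[set x | ~~ issq x]|.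
Proof.
have := sum_qchar; under eq_bigr => x _.
  rewrite qcharE (_ : (if _ then _ else _) = (x \in [set x | (x != 0) && issq x])%:R
                                            - (x \in [set x | ~~ issq x])%:R).
    over.
  rewrite !inE; have [->|_] := eqVneq x 0; last by case: (issq x).
  by rewrite (_ : issq 0) //; apply/existsP; exists 0; rewrite expr0n.
have sum_mem (A : {set F}) : \sum_x ((x \in A)%:R : int) = #|A|%:R.
  rewrite -sum1_card natr_sum [RHS]big_mkcond.
  by apply: eq_bigr => x _; case: (x \in A).
by rewrite sumrB !sum_mem => /eqP; rewrite subr_eq0 eqr_nat => /eqP.
Qed.

Lemma issqM a b : issq a -> issq b -> issq (a * b).
Proof.
move=> /existsP [s /eqP <-] /existsP [t /eqP <-].
by apply/existsP; exists (s * t); rewrite exprMn.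
Qed.

Lemma nsqM a b : issq a -> a != 0 -> ~~ issq b -> ~~ issq (a * b).
Proof.
move=> /existsP [s /eqP <-] s2_neq0; apply: contra => /existsP [t /eqP t2_ab].
by apply/existsP; exists (t / s); rewrite expr_div_n t2_ab (mulrC (s ^+ 2)) mulfK.
Qed.

Lemma nsqM_nsq a b : ~~ issq a -> ~~ issq b -> issq (a * b).
Proof.
move=> a_nsq b_nsq.
have a_neq0 : a != 0 by apply: contraNneq a_nsq => ->; apply/existsP; exists 0; rewrite expr0n.
have mul_sq_nsq : [set a * x | x in [set x | (x != 0) && issq x]] = [set x | ~~ issq x].
  apply/eqP; rewrite eqEcard card_imset ?card_sqr_nsq ?leqnn ?andbT; last exact: mulfI.
  apply/subsetP => y /imsetP [x]; rewrite !inE => /andP [x_neq0 x_sq] ->.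
  by rewrite mulrC nsqM.
have : b \in [set x | ~~ issq x] by rewrite inE.
rewrite -mul_sq_nsq => /imsetP [x]; rewrite inE => /andP [_ /existsP [t /eqP <-]] ->.
by apply/existsP; exists (a * t); rewrite mulrA -expr2 exprMn.
Qed.

Lemma qcharM a b : qchar (a * b) = qchar a * qchar b.
Proof.
rewrite !qcharE mulf_eq0.
have [_|a_neq0] := eqVneq a 0; first by rewrite mul0r.
have [_|b_neq0] := eqVneq b 0; first by rewrite mulr0.
case: (boolP (issq a)) => a_sq; case: (boolP (issq b)) => b_sq.
- by rewrite issqM.
- by rewrite (negbTE (nsqM a_sq a_neq0 b_sq)).
- by rewrite mulrC (negbTE (nsqM b_sq b_neq0 a_sq)).
- by rewrite nsqM_nsq.
Qed.

Lemma qchar1 : qchar 1 = 1.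
Proof. by rewrite -(expr1n _ 2) qchar_sqr ?oner_eq0. Qed.

Lemma qchar_sqrM t a : t != 0 -> qchar (t ^+ 2 * a) = qchar a.
Proof. by move=> t_neq0; rewrite qcharM qchar_sqr ?mul1r. Qed.

Lemma sqr_qchar a : a != 0 -> qchar a ^+ 2 = 1.
Proof. by move=> a_neq0; rewrite qcharE (negbTE a_neq0); case: (issq a). Qed.

Lemma sum_qchar_affine k b : k != 0 -> \sum_x qchar (k * x + b) = 0.
Proof.
move=> k_neq0; rewrite -[RHS]sum_qchar [RHS](reindex_inj (h := fun x => k * x + b)) //.
by move=> x y /addIr /(mulfI k_neq0).
Qed.

Lemma sum_nonzero_const (x : int) : \sum_(t : F | t != 0) x = x * (q%:Z - 1).
Proof.
rewrite sumr_const cardC1 -subn1 -mulr_natr natrB ?natz //.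
exact/ltnW/card_finNzRing_gt1.
Qed.

Lemma sum_qchar_sqr : \sum_x qchar (x ^+ 2) = q%:Z - 1.
Proof.
rewrite (bigD1 0) //= expr0n qchar0 add0r -[RHS]mul1r -sum_nonzero_const.
exact: eq_bigr qchar_sqr.
Qed.

Lemma sum_qchar_quadratic A B :
  \sum_x qchar ((x - A) * (x - B)) = if A == B then q%:Z - 1 else -1.
Proof.
rewrite (reindex_inj (addIr B)) /=; under eq_bigr do rewrite addrK.
have [->|AB] := eqVneq A B; first by under eq_bigr do rewrite addrK -expr2; exact: sum_qchar_sqr.
have d_neq0 : B - A != 0 by rewrite subr_eq0 eq_sym.
have shift x : qchar ((x + B - A) * x) = qchar ((B - A) * x^-1 + 1) - (x == 0)%:R.
  have [->|x_neq0] := eqVneq x 0; first by rewrite invr0 !mulr0 add0r qchar1 qchar0 subrr.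
  by rewrite subr0 -(qchar_sqrM (_ / x + 1) x_neq0); congr qchar; field.
rewrite (eq_bigr _ (fun x _ => shift x)) sumrB.
rewrite (reindex_inj invr_inj) /=; under eq_bigr do rewrite invrK.
by rewrite sum_qchar_affine // add0r (bigD1 0) //= big1 => [|x /negbTE -> //]; rewrite eqxx addr0.
Qed.

Definition jacobsthal (c : F) : int := \sum_v qchar (v * (v ^+ 2 + c)).

Lemma jacobsthal_scale t c : t != 0 -> jacobsthal (c * t ^+ 2) = qchar t * jacobsthal c.
Proof.
move=> t_neq0; rewrite /jacobsthal (reindex_inj (mulfI t_neq0)) mulr_sumr.
apply: eq_bigr => v _; rewrite -qcharM -(qchar_sqrM (t * _) t_neq0); congr qchar; ring.
Qed.

Lemma sum_jacobsthal_sqr : \sum_c jacobsthal c ^+ 2 <= 2 * q%:Z * (q%:Z - 1).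
Proof.
have expand c : jacobsthal c ^+ 2 =
    \sum_v \sum_w qchar (v * w) * qchar ((c - - v ^+ 2) * (c - - w ^+ 2)).
  rewrite expr2 /jacobsthal mulr_suml; apply: eq_bigr => v _.
  by rewrite mulr_sumr; apply: eq_bigr => w _; rewrite -!qcharM; congr qchar; ring.
rewrite (eq_bigr _ (fun c _ => expand c)) exchange_big; under eq_bigr do rewrite exchange_big.
(* Summing over c first, the inner sum is q - 1 or -1 according as v^2 = w^2. *)
under eq_bigr do under eq_bigr do rewrite -mulr_sumr sum_qchar_quadratic eqr_opp.
have term v w : qchar (v * w) * (if v ^+ 2 == w ^+ 2 then q%:Z - 1 else -1)
    <= q%:Z * ((v != 0)%:R * (w ^+ 2 == v ^+ 2)%:R) - qchar v * qchar w.
  rewrite -qcharM eq_sym; have [->|v_neq0] := eqVneq v 0; first by rewrite mul0r qchar0 !mul0r.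
  have := qchar_le1 (v * w); have := qchar_ge (v * w).
  by case: eqP => _ /=; rewrite ?mulr1 ?mulr0 => *; nia.
have count : \sum_v \sum_w
    (q%:Z * ((v != 0)%:R * (w ^+ 2 == v ^+ 2)%:R) - qchar v * qchar w) = 2 * q%:Z * (q%:Z - 1).
  under eq_bigr do rewrite sumrB -(mulr_sumr _ _ _ (qchar _)) sum_qchar mulr0 subr0 -mulr_sumr.
  rewrite -mulr_sumr (bigD1 0) //= big1 => [|w _]; last by rewrite eqxx mul0r.
  rewrite add0r (eq_bigr (fun=> 2)) => [|v v_neq0]; last first.
    by rewrite -mulr_sumr v_neq0 mul1r -nsqrt_sum nsqrt_sqr.
  by rewrite sum_nonzero_const mulrA [_ * 2]mulrC.
rewrite -count; exact: ler_sum (fun v _ => ler_sum _ (fun w _ => term v w)).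
Qed.

Lemma jacobsthal_sqr_le c : c != 0 -> jacobsthal c ^+ 2 <= 4 * q%:Z.
Proof.
move=> c_neq0.
(* Average over the square class of c, where jacobsthal ^+ 2 is constant. *)
have orbit : \sum_t jacobsthal (c * t ^+ 2) ^+ 2
    = jacobsthal 0 ^+ 2 + jacobsthal c ^+ 2 * (q%:Z - 1).
  rewrite (bigD1 0) //= expr0n mulr0 -sum_nonzero_const; congr (_ + _).
  by apply: eq_bigr => t t_neq0; rewrite jacobsthal_scale // exprMn sqr_qchar ?mul1r.
have orbit_le : \sum_t jacobsthal (c * t ^+ 2) ^+ 2 <= 2 * (2 * q%:Z * (q%:Z - 1)).
  rewrite (sum_sqr (fun z => jacobsthal (c * z) ^+ 2)).
  apply: le_trans (_ : _ <= \sum_z 2 * jacobsthal (c * z) ^+ 2) _.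
    by apply: ler_sum => z _; rewrite ler_wpM2r ?sqr_ge0 // lez_nat nsqrt_le2.
  rewrite -mulr_sumr ler_pM2l // [X in X <= _](reindex_inj (mulfI (invr_neq0 c_neq0))) /=.
  by under eq_bigr do rewrite mulVKf //; exact: sum_jacobsthal_sqr.
have q_gt1 : 1 < q%:Z by rewrite ltz_nat card_finNzRing_gt1.
have := sqr_ge0 (jacobsthal 0); move: orbit_le; rewrite orbit; nia.
Qed.

Lemma jacobsthalN c : \sum_v qchar (v * (c - v ^+ 2)) = jacobsthal (- c).
Proof.
by rewrite (reindex_inj oppr_inj); apply: eq_bigr => v _; congr qchar; ring.
Qed.

Lemma sum_pair_rotate (R : nmodType) (G : F -> F -> R) :
  \sum_x \sum_y G x y = \sum_s \sum_d G ((s + d) / 2) ((s - d) / 2).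
Proof.
rewrite !pair_big /= (reindex (fun sd : F * F => ((sd.1 + sd.2) / 2, (sd.1 - sd.2) / 2))) //=.
exists (fun xy : F * F => (xy.1 + xy.2, xy.1 - xy.2)) => [[s d] _ | [x y] _] /=.
  by congr pair; field.
by congr pair; field.
Qed.

Lemma sum_sqr_line (G : F -> F -> int) c :
  \sum_x \sum_y (x ^+ 2 + y ^+ 2 == c)%:R * G (x ^+ 2) (y ^+ 2)
  = \sum_u (nsqrt u)%:Z * (nsqrt (c - u))%:Z * G u (c - u).
Proof.
under eq_bigr do rewrite (sum_sqr (fun Y => (_ + Y == c)%:R * G _ Y)).
rewrite (sum_sqr (fun X => \sum_Y (nsqrt Y)%:Z * ((X + Y == c)%:R * G X Y))).
apply: eq_bigr => u _; rewrite (bigD1 (c - u)) //= (addrC u) subrK eqxx mul1r big1 ?addr0.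
  by rewrite mulrA.
move=> v v_ne; rewrite (_ : (u + v == c) = false) ?mul0r ?mulr0 //.
by apply: contraNF v_ne => /eqP <-; rewrite addrC addKr.
Qed.

Lemma sum_circle (a : F) : a != 0 -> \sum_x \sum_y (x ^+ 2 + y ^+ 2 == a)%:R = q%:Z - qchar (-1).
Proof.
move=> a_neq0; have := sum_sqr_line (fun _ _ => 1 : int) a.
under eq_bigr do under eq_bigr do rewrite mulr1; move=> ->.
have expand u : (nsqrt u)%:Z * (nsqrt (a - u))%:Z * 1
    = 1 + qchar u + qchar (-1 * u + a) + qchar (-1) * qchar ((u - 0) * (u - a)).
  rewrite -qcharM (_ : -1 * ((u - 0) * (u - a)) = u * (a - u)); last by ring.
  by rewrite (_ : -1 * u + a = a - u) ?qcharM ?mulr1 ?nsqrtE; ring.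
rewrite (eq_bigr _ (fun u _ => expand u)) 3!big_split /= sumr_const sum_qchar.
rewrite sum_qchar_affine ?oppr_eq0 ?oner_eq0 // -mulr_sumr sum_qchar_quadratic.
by rewrite eq_sym (negbTE a_neq0) natz; ring.
Qed.

Lemma sum_circle_qchar (a : F) :
  \sum_x \sum_y qchar x * (x ^+ 2 + y ^+ 2 == a)%:R = jacobsthal (- a).
Proof.
transitivity (\sum_x (qchar x + qchar (x * (a - x ^+ 2)))); last first.
  by rewrite big_split /= sum_qchar add0r jacobsthalN.
apply: eq_bigr => x _.
rewrite qcharM -[X in _ = X + _]mulr1 -mulrDr -nsqrtE nsqrt_sum mulr_sumr.
apply: eq_bigr => y _.
by rewrite addrC eq_sym -subr_eq eq_sym.
Qed.

Lemma sum_circle_qchar2 (a : F) : a != 0 ->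
  \sum_x \sum_y qchar x * qchar y * (x ^+ 2 + y ^+ 2 == a)%:R
  = qchar 2 * (jacobsthal (- a ^+ 2) - 1 - qchar (-1)).
Proof.
(* After the rotation, x y = (s^2 - d^2) / 4 and x^2 + y^2 = (s^2 + d^2) / 2. *)
move=> a_neq0; rewrite sum_pair_rotate.
have half_neq0 : (2 : F)^-1 != 0 by rewrite invr_eq0.
have rotate s d : qchar ((s + d) / 2) * qchar ((s - d) / 2)
      * ((((s + d) / 2) ^+ 2 + ((s - d) / 2) ^+ 2 == a)%:R)
    = (s ^+ 2 + d ^+ 2 == 2 * a)%:R * qchar (s ^+ 2 - d ^+ 2).
  rewrite mulrC -qcharM -(qchar_sqrM (s ^+ 2 - d ^+ 2) half_neq0).
  rewrite -(inj_eq (mulfI two_neq0)); congr (_%:R * qchar _); last by field.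
  by congr (_ == _); field.
under eq_bigr do under eq_bigr do rewrite rotate.
rewrite (sum_sqr_line (fun U V => qchar (U - V))) (reindex_inj (addIr a)) /=.
have expand v :
    (nsqrt (v + a))%:Z * (nsqrt (2 * a - (v + a)))%:Z * qchar (v + a - (2 * a - (v + a)))
    = qchar (2 * v + 0) + qchar 2 * qchar ((v - 0) * (v - - a))
      + qchar 2 * qchar (-1) * qchar ((v - 0) * (v - a))
      + qchar 2 * qchar (v * (a ^+ 2 - v ^+ 2)).
  have -> : 2 * a - (v + a) = a - v by ring.
  have -> : v + a - (a - v) = 2 * v by ring.
  have e1 : qchar 2 * qchar ((v - 0) * (v - - a)) = qchar (v + a) * qchar (2 * v).
    by rewrite -!qcharM; congr qchar; ring.
  have e2 : qchar 2 * qchar (-1) * qchar ((v - 0) * (v - a)) = qchar (a - v) * qchar (2 * v).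
    by rewrite -!qcharM; congr qchar; ring.
  have e3 : qchar 2 * qchar (v * (a ^+ 2 - v ^+ 2))
      = qchar (v + a) * qchar (a - v) * qchar (2 * v).
    by rewrite -!qcharM; congr qchar; ring.
  by rewrite e1 e2 e3 addr0 !nsqrtE; ring.
rewrite (eq_bigr _ (fun v _ => expand v)) 3!big_split /= sum_qchar_affine // -!mulr_sumr.
rewrite !sum_qchar_quadratic jacobsthalN eq_sym oppr_eq0 (negbTE a_neq0) eq_sym (negbTE a_neq0).
ring.
Qed.

Definition nrep_fourth (a : F) : int := \sum_u \sum_v (u ^+ 4 + v ^+ 4 == a)%:R.

Lemma nrep_fourthE a : a != 0 ->
  nrep_fourth a = q%:Z - qchar (-1) + 2 * jacobsthal (- a)
               + qchar 2 * (jacobsthal (- a ^+ 2) - 1 - qchar (-1)).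
Proof.
move=> a_neq0; rewrite /nrep_fourth.
have fourth u : u ^+ 4 = (u ^+ 2) ^+ 2 by rewrite -exprM.
under eq_bigr do under eq_bigr do rewrite !fourth.
under eq_bigr do rewrite (sum_sqr (fun y => (_ + y ^+ 2 == a)%:R)).
rewrite (sum_sqr (fun x => \sum_y (nsqrt y)%:Z * (x ^+ 2 + y ^+ 2 == a)%:R)).
have expand x y : (nsqrt x)%:Z * ((nsqrt y)%:Z * (x ^+ 2 + y ^+ 2 == a)%:R)
    = (x ^+ 2 + y ^+ 2 == a)%:R + qchar x * (x ^+ 2 + y ^+ 2 == a)%:R
      + qchar y * (y ^+ 2 + x ^+ 2 == a)%:R + qchar x * qchar y * (x ^+ 2 + y ^+ 2 == a)%:R.
  by rewrite (addrC (y ^+ 2)) !nsqrtE; ring.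
under eq_bigr do rewrite mulr_sumr (eq_bigr _ (fun y _ => expand _ y)) 3!big_split /=.
rewrite 3!big_split /= sum_circle // sum_circle_qchar sum_circle_qchar2 //.
by rewrite exchange_big sum_circle_qchar; ring.
Qed.

Lemma nfourth_roots_le4 (a : F) : \sum_u ((u ^+ 4 == a)%:R : int) <= 4.
Proof.
under eq_bigr => u _ do rewrite (exprM u 2 2).
rewrite (sum_sqr (fun y => (y ^+ 2 == a)%:R)).
apply: le_trans (_ : _ <= \sum_y 2 * (y ^+ 2 == a)%:R) _.
  by apply: ler_sum => y _; rewrite ler_wpM2r // lez_nat nsqrt_le2.
by rewrite -mulr_sumr -nsqrt_sum; have := nsqrt_le2 a; lia.
Qed.

Lemma nrep_fourth_le8 a :
  (forall u v, u != 0 -> v != 0 -> u ^+ 4 + v ^+ 4 != a) -> nrep_fourth a <= 8.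
Proof.
move=> no_rep.
have row u : \sum_v ((u ^+ 4 + v ^+ 4 == a)%:R : int)
    <= (u ^+ 4 == a)%:R + (u == 0)%:R * \sum_v (v ^+ 4 == a)%:R.
  have [->|u_neq0] := eqVneq u 0.
    by under eq_bigr do rewrite expr0n add0r; rewrite mul1r lerDr.
  rewrite mul0r addr0 (bigD1 0) //= expr0n addr0 big1 ?addr0 // => v v_neq0.
  by rewrite (negbTE (no_rep u v u_neq0 v_neq0)).
apply: le_trans (ler_sum _ (fun u _ => row u)) _.
rewrite big_split /= -mulr_suml.
have -> : \sum_(u : F) ((u == 0)%:R : int) = 1.
  by rewrite (bigD1 (0 : F)) //= eqxx big1 ?addr0 // => u /negbTE ->.
by rewrite mul1r (lerD (nfourth_roots_le4 a) (nfourth_roots_le4 a)).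
Qed.

Lemma sum_two_nonzero_fourth_powers (a : F) : a != 0 -> (56 <= q)%N ->
  exists u v, [/\ u != 0, v != 0 & u ^+ 4 + v ^+ 4 = a].
Proof.
move=> a_neq0 q_ge56.
have [/existsP [u /existsP [v /and3P [u_neq0 v_neq0 /eqP uva]]]|no_rep] :=
  boolP [exists u, exists v, [&& u != 0, v != 0 & u ^+ 4 + v ^+ 4 == a]].
  by exists u, v.
exfalso; have /nrep_fourth_le8 : forall u v, u != 0 -> v != 0 -> u ^+ 4 + v ^+ 4 != a.
  move=> u v u_neq0 v_neq0; apply: contraNneq no_rep => uva.
  by apply/existsP; exists u; apply/existsP; exists v; rewrite u_neq0 v_neq0 uva eqxx.
have Q_ge56 : 56 <= q%:Z by rewrite lez_nat.
have j1 : - (q%:Z - 11) < 3 * jacobsthal (- a).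
  by apply: sqr_le_lower_bound Q_ge56; apply: jacobsthal_sqr_le; rewrite oppr_eq0.
have j2 : - (q%:Z - 11) < 3 * (qchar 2 * jacobsthal (- a ^+ 2)).
  apply: sqr_le_lower_bound Q_ge56; rewrite exprMn sqr_qchar // mul1r.
  by apply: jacobsthal_sqr_le; rewrite oppr_eq0 sqrf_eq0.
have c3 : qchar 2 * qchar (-1) <= 1 by rewrite -qcharM qchar_le1.
rewrite nrep_fourthE //; have := qchar_le1 (-1); have := qchar_le1 2; lia.
Qed.

Lemma exists_nonfourth_power : exists a : F, forall u, u ^+ 4 != a.
Proof.
have [/forallP surj|/forallPn [a /existsPn no_root]] :=
  boolP [forall a : F, exists u, u ^+ 4 == a]; last by exists a.
have /image_injP fourth_inj : #|image (fun u : F => u ^+ 4) F| == #|F|.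
  apply/eqP/eq_card => a; rewrite inE /=.
  by have /existsP [u /eqP <-] := surj a; apply: image_f.
have /eqP : (1 : F) = -1 by apply: fourth_inj; rewrite // expr1n -signr_odd.
by rewrite -subr_eq0 opprK (negbTE two_neq0).
Qed.
End OddFiniteField.

Section PrimeField.
Variable p : nat.

Lemma sum_nz_powers0 d (a : 'F_p) : sum_nz_powers d 0 a = (a == 0).
Proof.
apply/existsP/idP => [[f /andP [_]]|a0]; first by rewrite big_ord0.
by exists [ffun=> 0]; rewrite big_ord0 a0 andbT; apply/forallP => -[].
Qed.

Lemma sum_nz_powersS d k (a : 'F_p) :
  sum_nz_powers d k.+1 a = [exists b, (b != 0) && sum_nz_powers d k (a - b ^+ d)].
Proof.
apply/existsP/existsP => [[f /andP [/forallP f_neq0 /eqP ->]]|[b /andP [b_neq0]]].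
  exists (f ord0); rewrite f_neq0; apply/existsP; exists [ffun i => f (lift ord0 i)].
  rewrite big_ord_recl (addrC (f ord0 ^+ d)) addrK; apply/andP; split.
    by apply/forallP => i; rewrite ffunE.
  by apply/eqP/eq_bigr => i _; rewrite ffunE.
move=> /existsP [g /andP [/forallP g_neq0 /eqP g_sum]].
exists [ffun i => if unlift ord0 i is Some j then g j else b]; apply/andP; split.
  by apply/forallP => i; rewrite ffunE; case: unliftP.
rewrite big_ord_recl ffunE unlift_none.
under eq_bigr do rewrite ffunE liftK.
by rewrite -g_sum addrC subrK.
Qed.

Lemma s_is1 d (a : 'F_p) : a != 0 -> sum_nz_powers d 1 a -> s_is d a 1.
Proof. by move=> a_neq0 a1; split=> // -[|] //; rewrite sum_nz_powers0. Qed.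

Lemma s_is2 d (a : 'F_p) :
  a != 0 -> ~~ sum_nz_powers d 1 a -> sum_nz_powers d 2 a -> s_is d a 2.
Proof. by move=> a_neq0 not1 a2; split=> // -[|[|]] //; rewrite sum_nz_powers0. Qed.

Hypothesis p_prime : prime p.

Lemma val_Fp_lt (x : 'F_p) : (nat_of_ord x < p)%N.
Proof. by case: x => x; rewrite /= Fp_cast. Qed.

Lemma val_Fp_sub (a b : 'F_p) : nat_of_ord (a - b) = ((a + (p - b)) %% p)%N.
Proof.
rewrite -val_Fp_nat // natrD natrB ?(ltnW (val_Fp_lt b)) // pchar_Fp_0 // sub0r.
by rewrite !natr_Zp.
Qed.

Lemma val_FpX (b : 'F_p) n : nat_of_ord (b ^+ n) = (nat_of_ord b ^ n %% p)%N.
Proof. by rewrite -[in LHS](natr_Zp b) -natrX val_Fp_nat. Qed.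

Lemma Fp_neq0E (b : 'F_p) : (b != 0) = (0 < nat_of_ord b)%N.
Proof. by rewrite lt0n -val_eqE. Qed.

Lemma mem_iota_Fp n : (n \in iota 1 p.-1) = (0 < n < p)%N.
Proof. by rewrite mem_iota add1n (prednK (prime_gt0 p_prime)). Qed.

Lemma val_natr_Fp n : (n < p)%N -> nat_of_ord (n%:R : 'F_p) = n.
Proof. by move=> n_lt_p; rewrite val_Fp_nat // modn_small. Qed.

(* vm_compute in 'F_p is too slow for the small primes, so sum_nz_powers is decided on
   residues in nat, P listing the residues of the nonzero d-th powers. *)
Section Decision.
Variables (d : nat) (P : seq nat).
Hypothesis memP : forall c, (c \in P) = [exists b : 'F_p, (b != 0) && (nat_of_ord (b ^+ d) == c)].

Fixpoint sums_mod (k a : nat) : bool :=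
  if k is k'.+1 then has (fun c => sums_mod k' ((a + (p - c)) %% p)) P else a == 0%N.

Definition least_sums_mod (k a : nat) : bool :=
  sums_mod k a && all (fun j => ~~ sums_mod j a) (iota 0 k).

Definition g_mod (n : nat) : bool :=
  all (fun a => has (least_sums_mod^~ a) (iota 0 n.+1)) (iota 1 p.-1)
  && has (least_sums_mod n) (iota 1 p.-1).

Lemma sum_nz_powers_mod k (a : 'F_p) : sum_nz_powers d k a = sums_mod k a.
Proof.
elim: k a => [|k IH] a; first by rewrite sum_nz_powers0 -val_eqE.
rewrite sum_nz_powersS /=; apply/existsP/hasP => [[b /andP [b_neq0]]|[c]].
  rewrite IH val_Fp_sub => ak; exists (nat_of_ord (b ^+ d)) => //.
  by rewrite memP; apply/existsP; exists b; rewrite b_neq0 /=.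
rewrite memP => /existsP [b /andP [b_neq0 /eqP <-]] ak.
by exists b; rewrite b_neq0 IH val_Fp_sub.
Qed.

Lemma least_sums_modP k (a : 'F_p) : least_sums_mod k a -> s_is d a k.
Proof.
move=> /andP [ak /allP least]; split=> [|j j_lt_k]; first by rewrite sum_nz_powers_mod.
by rewrite sum_nz_powers_mod least // mem_iota.
Qed.

Lemma g_modP n : g_mod n -> g_is d p n.
Proof.
move=> /andP [/allP all_least /hasP [a a_iota a_least]]; split.
  move=> b; rewrite Fp_neq0E => b_gt0.
  have /hasP [k k_iota b_least] : has (least_sums_mod^~ b) (iota 0 n.+1).
    by apply: all_least; rewrite mem_iota_Fp b_gt0 val_Fp_lt.
  by exists k; [exact: least_sums_modP | move: k_iota; rewrite mem_iota].
move: a_iota; rewrite mem_iota_Fp => /andP [a_gt0 a_lt_p].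
exists a%:R; first by rewrite Fp_neq0E val_natr_Fp.
by apply: least_sums_modP; rewrite val_natr_Fp.
Qed.
End Decision.

(* Squaring twice keeps the unary numbers small. *)
Definition fourth_powers_mod : seq nat := [seq ((m * m %% p) ^ 2 %% p)%N | m <- iota 1 p.-1].

Lemma fourth_powers_modP c :
  (c \in fourth_powers_mod) = [exists b : 'F_p, (b != 0) && (nat_of_ord (b ^+ 4) == c)].
Proof.
have pow4 (m : nat) : ((m * m %% p) ^ 2 %% p = m ^ 4 %% p)%N by rewrite modnXm mulnn -expnM.
apply/mapP/existsP => [[m m_iota ->]|[b /andP [b_neq0 /eqP <-]]].
  move: m_iota; rewrite mem_iota_Fp => /andP [m_gt0 m_lt_p].
  by exists m%:R; rewrite Fp_neq0E val_FpX !val_natr_Fp // m_gt0 pow4 eqxx.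
exists (nat_of_ord b); first by rewrite mem_iota_Fp -Fp_neq0E b_neq0 val_Fp_lt.
by rewrite val_FpX pow4.
Qed.
End PrimeField.

Lemma g_is_fourth_mod p n : prime p -> g_mod p (fourth_powers_mod p) n -> g_is 4 p n.
Proof. by move=> p_prime; apply: (g_modP p_prime (fourth_powers_modP p_prime)). Qed.

Lemma g_is_fourth_large p : prime p -> (56 <= p)%N -> g_is 4 p 2.
Proof.
move=> p_prime p_ge56.
have two_neq0 : (2 : 'F_p) != 0 by rewrite Fp_neq0E val_natr_Fp //; lia.
have sum2 (a : 'F_p) : a != 0 -> sum_nz_powers 4 2 a.
  move=> a_neq0; have [|u [v [u_neq0 v_neq0 uva]]] :=
    sum_two_nonzero_fourth_powers two_neq0 a_neq0; first by rewrite card_Fp.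
  rewrite sum_nz_powersS; apply/existsP; exists u; rewrite u_neq0 sum_nz_powersS.
  by apply/existsP; exists v; rewrite v_neq0 sum_nz_powers0 -uva; apply/eqP; ring.
split=> [a a_neq0|].
  have [a1|not1] := boolP (sum_nz_powers 4 1 a); first by exists 1%N; first exact: s_is1.
  by exists 2%N; first exact: s_is2 _ not1 (sum2 _ a_neq0).
have [a no_root] := exists_nonfourth_power two_neq0.
have a_neq0 : a != 0 by apply: contraNneq (no_root 0) => ->; rewrite expr0n.
exists a; rewrite //; apply: s_is2 a_neq0 _ (sum2 _ a_neq0).
rewrite sum_nz_powersS; apply/existsP => -[b /andP [_]].
by rewrite sum_nz_powers0 subr_eq0 eq_sym (negbTE (no_root b)).
Qed.

Lemma small_primes_1mod4 :
  [seq p <- iota 0 56 | prime p && (p %% 4 == 1)%N] = [:: 5; 13; 17; 29; 37; 41; 53]%N.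
Proof. by vm_compute. Qed.

Theorem theorem5 (p f : nat) (x y : int) :
  prime p -> p = (4 * f + 1)%N ->
  (p%:Z = x ^+ 2 + 4 * y ^+ 2)%R -> (x = 1 %[mod 4])%Z ->
  [/\ p = 5%N -> g_is 4 p 4,
      p \in [:: 13; 17; 29]%N -> g_is 4 p 3
    & p \notin [:: 5; 13; 17; 29]%N -> g_is 4 p 2].
Proof.
move=> p_prime p_def _ _.
have [p_small|p_large] := ltnP p 56.
  have : p \in [:: 5; 13; 17; 29; 37; 41; 53]%N.
    by rewrite -small_primes_1mod4 mem_filter p_prime mem_iota p_small p_def; apply/eqP; lia.
  rewrite !inE => /or4P [/eqP->|/eqP->|/eqP->|/or4P [/eqP->|/eqP->|/eqP->|/eqP->]];
    by split=> // _; apply: g_is_fourth_mod => //; vm_compute.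
split=> [p5|p_in|_]; last exact: g_is_fourth_large.
  by rewrite p5 in p_large.
by move: p_in p_large; rewrite !inE => /or3P [] /eqP ->.
Qed.
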